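(* Let $G$ be an ordered graph and let $H$ be a spanning subgraph of $G$ (with the orders inherited from $G$). Then for every edge $e\in E(H)$ we have $\mathrm{ht}_H(e)\preceq_{\mathrm{lex}}\mathrm{ht}_G(e)$.
   Context: An ordered graph is a finite simple graph $G$ equipped with a total order $\le_G$ on $E(G)$ and a total order $\le^V_G$ on $V(G)$. Let $\mathbb N=\{1,2,\dots\}$. Define $\preceq_{\mathrm{lex}}$ on $\mathbb N\times V(G)$ by $(i,v)\preceq_{\mathrm{lex}}(i',v')$ iff $i<i'$, or $i=i'$ and $v\le^V_G v'$. The height table $\mathrm{HT}(G)$ is a partially filled array indexed by $\mathbb N\times V(G)$, built by going through all $(i,v)$ in $\preceq_{\mathrm{lex}}$-increasing order and setting the entry at $(i,v)$ to be the $\le_G$-largest edge containing $v$ not yet entered into the table (blank if none remain). Every edge is entered exactly once; $\mathrm{ht}_G(e)$ denotes the position (row, column) of $e$ in $\mathrm{HT}(G)$. *)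

From mathcomp Require Import all_boot.
Set Implicit Arguments. Unset Strict Implicit. Unset Printing Implicit Defensive.

(* An ordered graph on a finite vertex type V:
   - E : {set {set V}} the edge set, each edge a 2-element subset of V;
   - vr : V -> nat an injective rank function encoding the total vertex order
     (u <=^V v  iff  vr u <= vr v);
   - er : {set V} -> nat injective on E, encoding the total edge order
     (e <= f iff er e <= er f).  A subgraph inherits both orders by using the
     same vr and er. *)

Section HeightTable.
Variable V : finType.
Variable vr : V -> nat.
Variable er : {set V} -> nat.

Definition simple_graph (E : {set {set V}}) : Prop :=
  forall e, e \in E -> #|e| = 2.

Definition vlist : seq V := sort (fun u v => vr u <= vr v) (enum V).

Definition largest_edge (R : {set {set V}}) (v : V) : option {set V} :=
  [pick e in R | (v \in e) && [forall f in R, (v \in f) ==> (er f <= er e)]].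

(* process row i, going through vertices vs in order; returns remaining edges
   and the list of entries (edge, (row, column)) created *)
Fixpoint fill_row (R : {set {set V}}) (i : nat) (vs : seq V)
  : {set {set V}} * seq ({set V} * (nat * V)) :=
  match vs with
  | [::] => (R, [::])
  | v :: vs' =>
      match largest_edge R v with
      | Some e =>
          let: (R', l) := fill_row (R :\ e) i vs' in (R', (e, (i, v)) :: l)
      | None => fill_row R i vs'
      end
  end.

Fixpoint fill_rows (k : nat) (i : nat) (R : {set {set V}})
  : seq ({set V} * (nat * V)) :=
  match k with
  | 0 => [::]
  | k'.+1 => let: (R', l) := fill_row R i vlist in l ++ fill_rows k' i.+1 R'
  end.

(* Rows are numbered from 1; #|E|.+1 rows suffice, since
   every row containing no entry has an empty remaining edge set. *)
Definition height_table (E : {set {set V}}) : seq ({set V} * (nat * V)) :=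
  fill_rows #|E|.+1 1 E.

Definition ht (E : {set {set V}}) (e : {set V}) : option (nat * V) :=
  omap snd (ohead [seq p <- height_table E | p.1 == e]).

Definition lex_le (p q : nat * V) : bool :=
  (p.1 < q.1) || ((p.1 == q.1) && (vr p.2 <= vr q.2)).

End HeightTable.

From mathcomp Require Import all_boot.
Set Implicit Arguments. Unset Strict Implicit. Unset Printing Implicit Defensive.

(* HT(G) is obtained by visiting the positions (i, v) in lexicographic order
   and, at each of them, removing from the set of remaining edges the largest
   one containing v.  Run this process for G and H side by side: the remaining
   edges of H always form a subset of those of G, because when G removes an
   edge g that H still has, g is also the largest remaining edge of H at that
   vertex.  So if G enters e at position p, then either H has entered e before,
   or e still remains for H at p and H enters it there as well. *)

Section HeightTableProcess.
Variable V : finType.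
Variable vr : V -> nat.
Variable er : {set V} -> nat.

Implicit Types (R RH RG : {set {set V}}) (e f : {set V}) (v : V) (p : nat * V).

Lemma largest_edge_Some R v e : largest_edge er R v = Some e ->
  [/\ e \in R, v \in e & forall f, f \in R -> v \in f -> er f <= er e].
Proof.
rewrite /largest_edge; case: pickP => // g /and3P[gR vg /forall_inP gmax] [<-].
by split=> // f fR; apply/implyP/gmax.
Qed.

Lemma largest_edge_None R v f : largest_edge er R v = None -> f \in R -> v \notin f.
Proof.
rewrite /largest_edge; case: pickP => // none _ fR; apply/negP => vf.
have [g /andP[gR vg] gmax] := @arg_maxnP _ f (fun g => (g \in R) && (v \in g)) er
  (introT andP (conj fR vf)).
have /and3P[] := negbT (none g); split=> //.
by apply/forall_inP => h hR; apply/implyP => vh; apply: gmax; rewrite hR vh.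
Qed.

Lemma largest_edge_sub RH RG v e : RH \subset RG -> {in RG &, injective er} ->
  largest_edge er RG v = Some e -> e \in RH -> largest_edge er RH v = Some e.
Proof.
move=> sHG erI /largest_edge_Some[eG ve emax] eH.
case lH: (largest_edge er RH v) => [h|]; last by move: (largest_edge_None lH eH); rewrite ve.
have [hH vh hmax] := largest_edge_Some lH.
have hG := subsetP sHG h hH.
by congr Some; apply: erI => //; apply/eqP; rewrite eqn_leq emax // hmax.
Qed.

Definition remove_largest R v : {set {set V}} :=
  if largest_edge er R v is Some e then R :\ e else R.

Lemma remove_largest_sub R v : remove_largest R v \subset R.
Proof. by rewrite /remove_largest; case: largest_edge => // e; apply: subD1set. Qed.

Lemma mem_remove_largest R v e :
  e \in R -> largest_edge er R v != Some e -> e \in remove_largest R v.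
Proof.
rewrite /remove_largest; case: largest_edge => // g eR neg.
by rewrite !inE eR andbT eq_sym; apply: contra_neq neg => ->.
Qed.

Lemma remove_largest_subset RH RG v : RH \subset RG -> {in RG &, injective er} ->
  remove_largest RH v \subset remove_largest RG v.
Proof.
move=> sHG erI; apply/subsetP => f fH'.
have fH := subsetP (remove_largest_sub RH v) f fH'.
rewrite /remove_largest; case lG: largest_edge => [g|]; last exact: subsetP sHG f fH.
rewrite !inE (subsetP sHG f fH) andbT; apply: contraTneq fH' => fg.
by rewrite /remove_largest (largest_edge_sub sHG erI lG) ?fg ?setD11 // -fg.
Qed.

Definition remaining R (ps : seq (nat * V)) : {set {set V}} :=
  foldl (fun R p => remove_largest R p.2) R ps.

Fixpoint entries R (ps : seq (nat * V)) : seq ({set V} * (nat * V)) :=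
  if ps is p :: ps' then
    let l := entries (remove_largest R p.2) ps' in
    if largest_edge er R p.2 is Some e then (e, p) :: l else l
  else [::].

Lemma remaining_cat R ps qs : remaining R (ps ++ qs) = remaining (remaining R ps) qs.
Proof. exact: foldl_cat. Qed.

Lemma entries_cat R ps qs :
  entries R (ps ++ qs) = entries R ps ++ entries (remaining R ps) qs.
Proof.
elim: ps R => [|p ps IH] R //=.
by case: (largest_edge er R p.2) => [e|]; rewrite IH.
Qed.

Lemma remaining_sub R ps : remaining R ps \subset R.
Proof.
elim: ps R => [|p ps IH] R /=; first exact: subxx.
exact: subset_trans (IH _) (remove_largest_sub _ _).
Qed.

Lemma remaining_set0 ps : remaining set0 ps = set0.
Proof. by apply/eqP; rewrite -subset0 remaining_sub. Qed.

Lemma entries_set0 ps : entries set0 ps = [::].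
Proof.
elim: ps => [|p ps IH] //=; rewrite /remove_largest.
by case: largest_edge (@largest_edge_Some set0 p.2) => [e /(_ e erefl)[]|]; rewrite ?inE.
Qed.

Lemma mem_entries R ps e :
  e \in R -> e \notin remaining R ps -> e \in map fst (entries R ps).
Proof.
elim: ps R => [|p ps IH] R /=; first by move=> ->.
rewrite /remove_largest; case: largest_edge => [g|] eR; last exact: IH.
rewrite /= inE; case: (eqVneq e g) => //= neg eRem.
by rewrite IH // !inE neg.
Qed.

Lemma card_remaining_lt R ps e v j :
  e \in R -> v \in e -> (j, v) \in ps -> #|remaining R ps| < #|R|.
Proof.
elim: ps R => [|p ps IH] R // eR ve; rewrite inE /= /remove_largest.
case lR: largest_edge => [g|] /=.
  have [gR _ _] := largest_edge_Some lR.
  move=> _; rewrite (cardsD1 g R) gR.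
  exact: leq_ltn_trans (subset_leq_card (remaining_sub _ _)) _.
case/orP=> [/eqP pE|]; last exact: IH.
by move: (largest_edge_None lR eR); rewrite -pE /= ve.
Qed.

Definition positions (k i : nat) : seq (nat * V) :=
  [seq (j, v) | j <- iota i k, v <- vlist vr].

Lemma positionsS k i :
  positions k.+1 i = [seq (i, v) | v <- vlist vr] ++ positions k i.+1.
Proof. by []. Qed.

Lemma positionsD k m i : positions (k + m) i = positions k i ++ positions m (i + k).
Proof. by rewrite /positions iotaD allpairs_cat. Qed.

Lemma lex_le_refl p : lex_le vr p p.
Proof. by rewrite /lex_le eqxx leqnn orbT. Qed.

Lemma pairwise_lex_positions k i : pairwise (lex_le vr) (positions k i).
Proof.
elim: k i => [|k IH] i //; rewrite positionsS pairwise_cat IH andbT.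
apply/andP; split.
  apply/allrelP => _ q /mapP[v _ ->] /allpairsP[[j w] [/= + _ ->]].
  by rewrite mem_iota /lex_le /= => /andP[-> _].
rewrite pairwise_map; apply: (@sub_pairwise _ (fun u w => vr u <= vr w)).
  by move=> u w /= uw; rewrite /lex_le /= eqxx uw orbT.
rewrite -sorted_pairwise; last by move=> ? ? ?; apply: leq_trans.
by apply: sort_sorted => u w; apply: leq_total.
Qed.

Lemma remaining_positions R k i :
  set0 \notin R -> #|R| < k -> remaining R (positions k i) = set0.
Proof.
elim: k i R => [|k IH] i R // R0 Rk; rewrite positionsS remaining_cat.
have [->|[e eR]] := set_0Vmem R; first by rewrite !remaining_set0.
have [v ve] : exists v, v \in e by apply/set0Pn; apply: contraNneq R0 => <-.
apply: IH.
  by apply: contra R0; apply/subsetP/remaining_sub.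
apply: leq_trans (card_remaining_lt eR ve _) Rk.
by apply/mapP; exists v; rewrite // mem_sort mem_enum.
Qed.

Definition entry_pos e (l : seq ({set V} * (nat * V))) : option (nat * V) :=
  omap snd (ohead [seq q <- l | q.1 == e]).

Lemma entry_pos_exists e l : e \in map fst l -> exists p, entry_pos e l = Some p.
Proof.
elim: l => [|[f q] l IH] //=; rewrite inE /entry_pos /=.
by case: eqVneq => [->|_] /=; [exists q | exact: IH].
Qed.

Lemma entry_pos_mem e l p : entry_pos e l = Some p -> p \in map snd l.
Proof.
elim: l => [|[f q] l IH] //=; rewrite /entry_pos /= inE.
by case: (f == e) => [[->]|/IH->]; rewrite ?eqxx ?orbT.
Qed.

Lemma entry_pos_entries_exists R ps e :
  e \in R -> remaining R ps = set0 -> exists p, entry_pos e (entries R ps) = Some p.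
Proof. by move=> eR R0; apply/entry_pos_exists/mem_entries; rewrite ?R0 ?inE. Qed.

Lemma snd_entries_sub R ps : {subset map snd (entries R ps) <= ps}.
Proof.
move=> p; elim: ps R => [|q ps IH] R //=; rewrite inE.
case: largest_edge => [g|] /=; last by move/IH->; rewrite orbT.
by rewrite inE => /orP[->|/IH->]; rewrite ?orbT.
Qed.

Lemma entry_pos_entries_cons R e p ps :
  entry_pos e (entries R (p :: ps)) =
  if largest_edge er R p.2 == Some e then Some p
  else entry_pos e (entries (remove_largest R p.2) ps).
Proof.
rewrite /=; case: largest_edge => [g|] //=.
by rewrite /entry_pos /= (inj_eq Some_inj); case: ifP.
Qed.

Lemma fill_row_entries R i vs :
  fill_row er R i vs =
  (remaining R [seq (i, v) | v <- vs], entries R [seq (i, v) | v <- vs]).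
Proof.
elim: vs R => [|v vs IH] R //=.
by rewrite /remove_largest; case: largest_edge => [g|]; rewrite IH.
Qed.

Lemma fill_rows_entries k i R : fill_rows vr er k i R = entries R (positions k i).
Proof.
elim: k i R => [|k IH] i R //=.
by rewrite fill_row_entries positionsS entries_cat IH.
Qed.

Lemma ht_entries R e k :
  set0 \notin R -> #|R| < k -> ht vr er R e = entry_pos e (entries R (positions k 1)).
Proof.
move=> R0 Rk; rewrite -(subnKC Rk) positionsD entries_cat remaining_positions //.
by rewrite entries_set0 cats0 /ht /height_table fill_rows_entries.
Qed.

Lemma entry_pos_subset_lex_le ps RH RG e pG :
  pairwise (lex_le vr) ps -> RH \subset RG -> {in RG &, injective er} -> e \in RH ->
  entry_pos e (entries RG ps) = Some pG ->
  exists2 pH, entry_pos e (entries RH ps) = Some pH & lex_le vr pH pG.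
Proof.
elim: ps RH RG => [|p ps IH] RH RG //.
rewrite [pairwise _ _]/= => /andP[/allP p_le ps_lex] sHG erI eH posG.
have p_le_pG : lex_le vr p pG.
  have := snd_entries_sub (entry_pos_mem posG); rewrite inE.
  by case/orP=> [/eqP <-|]; [apply: lex_le_refl | apply: p_le].
rewrite entry_pos_entries_cons in posG; rewrite entry_pos_entries_cons.
case: ifPn => [_|pickH]; first by exists p.
have pickG : largest_edge er RG p.2 != Some e.
  by apply: contraNneq pickH => /largest_edge_sub ->.
rewrite (negbTE pickG) in posG; apply: IH posG => //.
- exact: remove_largest_subset.
- by apply: sub_in2 erI; apply/subsetP/remove_largest_sub.
- exact: mem_remove_largest.
Qed.

End HeightTableProcess.

Theorem lemma3p8 (V : finType) (vr : V -> nat) (er : {set V} -> nat)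
  (EG EH : {set {set V}}) :
  injective vr ->
  {in EG &, injective er} ->
  simple_graph EG ->
  EH \subset EG ->
  forall e, e \in EH ->
    exists pH pG, [/\ ht vr er EH e = Some pH, ht vr er EG e = Some pG
                    & lex_le vr pH pG].
Proof.
(* Ties in the vertex order are harmless. *)
move=> _ erI simpleG sHG e eH; have eG := subsetP sHG e eH.
have G0 : set0 \notin EG by apply/negP => /simpleG; rewrite cards0.
have H0 : set0 \notin EH by apply: contra G0; apply: (subsetP sHG).
have EGk := ltnSn #|EG|.
have EHk : #|EH| < #|EG|.+1 by rewrite ltnS subset_leq_card.
rewrite (ht_entries _ _ e H0 EHk) (ht_entries _ _ e G0 EGk).
have [pG posG] := entry_pos_entries_exists eG (remaining_positions vr er 1 G0 EGk).
have [pH posH le_pHG] :=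
  entry_pos_subset_lex_le (pairwise_lex_positions _ _ _) sHG erI eH posG.
by exists pH, pG.
Qed.
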